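(* Fix labels $z_1,\dots,z_n\in[K]$ such that every community size $n_k=\#\{i:z_i=k\}$ is positive (so $\mathbf{N}=\mathrm{diag}(n_1,\dots,n_K)$ is invertible). Then $\tilde{\mathbf{L}}\tilde{\mathbf{L}}^\top\mathbf{x}=T\mathbf{x}$ for every $\mathbf{x}\in\mathcal{S}^\perp$, and if $\tilde{\mathbf{x}}^{(1)},\dots,\tilde{\mathbf{x}}^{(K)}$ are orthonormal left singular vectors of $\tilde{\mathbf{M}}$ for the singular values $\tilde\lambda_1,\dots,\tilde\lambda_K$, then the vectors $\tilde{\mathbf{u}}^{(i)}=\mathbf{\Phi}\mathbf{N}^{-1/2}\tilde{\mathbf{x}}^{(i)}\in\mathcal{S}$ are orthonormal and satisfy $\tilde{\mathbf{L}}\tilde{\mathbf{L}}^\top\tilde{\mathbf{u}}^{(i)}=\tilde\lambda_i^2\tilde{\mathbf{u}}^{(i)}$. Consequently the SVD of $\tilde{\mathbf{L}}$ consists of the singular value $\sqrt T$ with multiplicity $n-K$, whose left singular vectors form an orthonormal basis of $\mathcal{S}^\perp$, together with the singular values $\tilde\lambda_1,\dots,\tilde\lambda_K$ with corresponding left singular vectors $\tilde{\mathbf{u}}^{(1)},\dots,\tilde{\mathbf{u}}^{(K)}$.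
   Context: Let $\mathbf{B}^{(1)},\dots,\mathbf{B}^{(T)}\in[0,1]^{K\times K}$ be symmetric with all entries positive, $\rho\in(0,1]$, and $P^{(t)}_{ij}=\rho B^{(t)}_{z_iz_j}$. $\tilde d^{(t)}_i=\sum_jP^{(t)}_{ij}$, $\tilde{\mathbf{D}}^{(t)}=\mathrm{diag}(\tilde d^{(t)}_i)$, $\tilde{\mathbf{L}}^{(t)}=\mathbf{I}_n-\tilde{\mathbf{D}}^{(t)-1/2}\mathbf{P}^{(t)}\tilde{\mathbf{D}}^{(t)-1/2}$, $\tilde{\mathbf{L}}=[\tilde{\mathbf{L}}^{(1)}\mid\cdots\mid\tilde{\mathbf{L}}^{(T)}]\in\mathbb{R}^{n\times nT}$. Community matrices: $\tilde Q^{(t)}_{kl}=\frac{n_k}{n}\frac{n_l}{n}B^{(t)}_{kl}$, $\tilde{\mathbf{D}}_Q^{(t)}$ the diagonal matrix of row sums of $\tilde{\mathbf{Q}}^{(t)}$, $\tilde{\mathbf{M}}^{(t)}=\mathbf{I}_K-\tilde{\mathbf{D}}_Q^{(t)-1/2}\tilde{\mathbf{Q}}^{(t)}\tilde{\mathbf{D}}_Q^{(t)-1/2}$, $\tilde{\mathbf{M}}=[\tilde{\mathbf{M}}^{(1)}\mid\cdots\mid\tilde{\mathbf{M}}^{(T)}]\in\mathbb{R}^{K\times KT}$ with singular values $\tilde\lambda_1\le\cdots\le\tilde\lambda_K$. $\mathbf{\Phi}\in\{0,1\}^{n\times K}$ has entries $\Phi_{ik}=1$ iff $z_i=k$; $\mathcal{S}$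 is the column span of $\mathbf{\Phi}$ and $\mathcal{S}^\perp=\{\mathbf{x}\in\mathbb{R}^n:\sum_{i:z_i=k}x_i=0\ \forall k\}$. *)

From HB Require Import structures.
From mathcomp Require Import all_boot all_order all_algebra.
Set Implicit Arguments. Unset Strict Implicit. Unset Printing Implicit Defensive.
Import Order.TTheory GRing.Theory Num.Theory.
Local Open Scope ring_scope.

Section Defs.
Variable R : rcfType.

Definition diag_invsqrt m (d : 'I_m -> R) : 'M[R]_m :=
  diag_mx (\row_i (Num.sqrt (d i))^-1).

Variables (n K T : nat) (z : 'I_n -> 'I_K) (B : 'I_T -> 'M[R]_K) (rho : R).

Definition csize (k : 'I_K) : nat := #|[set i | z i == k]|.

Definition Pmat (t : 'I_T) : 'M[R]_n := \matrix_(i, j) (rho * B t (z i) (z j)).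
Definition deg (t : 'I_T) (i : 'I_n) : R := \sum_j Pmat t i j.
Definition Lt (t : 'I_T) : 'M[R]_n :=
  1%:M - diag_invsqrt (deg t) *m Pmat t *m diag_invsqrt (deg t).
Definition Lfull : 'M[R]_(n, \sum_(t < T) n) := @mxrow R T (fun _ => n) n Lt.

Definition Qmat (t : 'I_T) : 'M[R]_K :=
  \matrix_(k, l) ((csize k)%:R / n%:R * ((csize l)%:R / n%:R) * B t k l).
Definition degQ (t : 'I_T) (k : 'I_K) : R := \sum_l Qmat t k l.
Definition Mt (t : 'I_T) : 'M[R]_K :=
  1%:M - diag_invsqrt (degQ t) *m Qmat t *m diag_invsqrt (degQ t).
Definition Mfull : 'M[R]_(K, \sum_(t < T) K) := @mxrow R T (fun _ => K) K Mt.

Definition Phi : 'M[R]_(n, K) := \matrix_(i, k) (z i == k)%:R.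
Definition Ninvsqrt : 'M[R]_K := diag_invsqrt (fun k => (csize k)%:R).

Definition inS (x : 'cV[R]_n) : Prop := exists c : 'cV[R]_K, x = Phi *m c.
Definition inSperp (x : 'cV[R]_n) : Prop :=
  forall k : 'I_K, \sum_(i | z i == k) x i 0 = 0.
End Defs.

Definition orthonormal_vecs (R : rcfType) m p (x : 'I_p -> 'cV[R]_m) : Prop :=
  forall i j, (x i)^T *m x j = (i == j)%:R%:M.

Definition left_sing_vec (R : rcfType) m p (A : 'M[R]_(m, p)) (s : R) (x : 'cV[R]_m) : Prop :=
  0 <= s /\ x^T *m x = 1%:M /\
  exists y : 'cV[R]_p, y^T *m y = 1%:M /\ A *m y = s *: x /\ A^T *m x = s *: y.

(* With E_t the community degrees (cdeg) and C_t = E_t^-1/2 B_t E_t^-1/2, the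
   normalized affinities factor as D_t^-1/2 P_t D_t^-1/2 = Phi C_t Phi^T and
   D_Q^-1/2 Q_t D_Q^-1/2 = N^1/2 C_t N^1/2.  Hence every L^(t) is the identity
   on S^perp, so L L^T = T there, and L^(t) (Phi N^-1/2) = (Phi N^-1/2) M^(t)
   with Phi N^-1/2 an isometry, so singular pairs of M lift blockwise to
   singular pairs of L.  The lifted left vectors, completed by an orthonormal
   basis of S^perp, form an orthonormal eigenbasis of L L^T, from which the
   right singular vectors and the SVD are assembled. *)

From mathcomp Require Import all_boot all_order all_algebra.
From mathcomp Require Import ring zify.
Import Order.TTheory GRing.Theory Num.Theory.
Local Open Scope ring_scope.
Set Implicit Arguments. Unset Strict Implicit. Unset Printing Implicit Defensive.

Definition colmx (R : Type) m p (f : 'I_p -> 'cV[R]_m) : 'M[R]_(m, p) :=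
  \matrix_(j, i) f i j 0.

Lemma col_colmx (R : Type) m p (f : 'I_p -> 'cV[R]_m) i : col i (colmx f) = f i.
Proof. by apply/matrixP => j k; rewrite !mxE ord1. Qed.

Lemma mul_colmx (R : pzSemiRingType) m n p (A : 'M[R]_(m, n)) (f : 'I_p -> 'cV[R]_n) :
  A *m colmx f = colmx (fun i => A *m f i).
Proof. by apply/matrixP => j i; rewrite !mxE; apply: eq_bigr => k _; rewrite !mxE. Qed.

Lemma tr_col_mul_col (R : comPzSemiRingType) m p q (A : 'M[R]_(m, p)) (C : 'M[R]_(m, q)) i j :
  (col i A)^T *m col j C = ((A^T *m C) i j)%:M.
Proof.
by apply/matrixP => a b; rewrite !ord1 !mxE eqxx mulr1n; apply: eq_bigr => k _; rewrite !mxE.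
Qed.

Lemma orthonormal_colmx (R : rcfType) m p (f : 'I_p -> 'cV[R]_m) :
  orthonormal_vecs f -> (colmx f)^T *m colmx f = 1%:M.
Proof.
move=> onf; apply/matrixP => i j; have := tr_col_mul_col (colmx f) (colmx f) i j.
by rewrite !col_colmx onf => /matrixP/(_ 0 0); rewrite !mxE eqxx !mulr1n => <-.
Qed.

Section RealMatrices.
Variable R : rcfType.

Lemma tr_mul_self_gt0 m (w : 'cV[R]_m) : w != 0 -> 0 < (w^T *m w) 0 0.
Proof.
move=> w0; have -> : (w^T *m w) 0 0 = \sum_i w i 0 ^+ 2.
  by rewrite mxE; apply: eq_bigr => i _; rewrite mxE expr2.
rewrite lt_def sumr_ge0 ?andbT => [|i _]; last exact: sqr_ge0.
apply: contra w0 => /eqP /psumr_eq0P w2; apply/eqP/colP => i.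
by rewrite mxE; apply/eqP; rewrite -sqrf_eq0 w2 // => j _; apply: sqr_ge0.
Qed.

Lemma tr_mul_self_eq0 m (w : 'cV[R]_m) : w^T *m w = 0 -> w = 0.
Proof.
move=> ww; apply/eqP/negPn/negP => /tr_mul_self_gt0.
by rewrite ww mxE ltxx.
Qed.

Lemma mul_tr_self_eq0 m N (A : 'M[R]_(m, N)) (u : 'cV[R]_m) :
  A *m A^T *m u = 0 -> A^T *m u = 0.
Proof.
move=> AAu; apply: tr_mul_self_eq0.
by rewrite trmx_mul trmxK -mulmxA (mulmxA A) AAu mulmx0.
Qed.

Lemma exists_unit_ker m k (A : 'M[R]_(m, k)) : (k < m)%N ->
  exists v : 'cV[R]_m, A^T *m v = 0 /\ v^T *m v = 1%:M.
Proof.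
move=> km; have : kermx A != 0.
  by rewrite -mxrank_eq0 mxrank_ker -lt0n subn_gt0 (leq_ltn_trans (rank_leq_col A)).
case/rowV0Pn => w /sub_kermxP wA w0.
have Aw : A^T *m w^T = 0 by rewrite -trmx_mul wA trmx0.
have q_gt0 : 0 < (w^T^T *m w^T) 0 0 by rewrite tr_mul_self_gt0 ?trmx_eq0.
set q := (w^T^T *m w^T) 0 0 in q_gt0.
exists ((Num.sqrt q)^-1 *: w^T); split; first by rewrite -scalemxAr Aw scaler0.
rewrite [(_ *: w^T)^T]linearZ /= -scalemxAl -scalemxAr scalerA [_ *m _]mx11_scalar -/q.
rewrite scale_scalar_mx -invfM -expr2 sqr_sqrtr ?ltW // mulVf ?gt_eqF //.
Qed.

Lemma orthonormal_row_mx m k p (A : 'M[R]_(m, k)) (C : 'M[R]_(m, p)) :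
  A^T *m A = 1%:M -> C^T *m C = 1%:M -> A^T *m C = 0 ->
  (row_mx A C)^T *m row_mx A C = 1%:M.
Proof.
move=> AtA CtC AtC; have CtA : C^T *m A = 0 by rewrite -[LHS]trmxK trmx_mul trmxK AtC trmx0.
by rewrite tr_row_mx mul_col_row AtA CtC AtC CtA -scalar_mx_block.
Qed.

Lemma orthonormal_completion m p : forall k (A : 'M[R]_(m, k)),
  (k + p <= m)%N -> A^T *m A = 1%:M ->
  exists C : 'M[R]_(m, p), A^T *m C = 0 /\ C^T *m C = 1%:M.
Proof.
elim: p => [|p IHp] k A kpm AtA.
  by exists 0; rewrite mulmx0; split => //; apply/matrixP => -[].
have [v [Atv vtv]] := exists_unit_ker A (ltac:(lia) : (k < m)%N).
have [C [AvtC CtC]] := IHp _ (row_mx A v) (ltac:(lia)) (orthonormal_row_mx AtA vtv Atv).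
move: AvtC; rewrite tr_row_mx mul_col_mx => /eqP.
rewrite col_mx_eq0 => /andP[/eqP AtC /eqP vtC].
rewrite -[p.+1]/(1 + p)%N; exists (row_mx v C); split.
  by rewrite mul_mx_row Atv AtC row_mx0.
exact: orthonormal_row_mx.
Qed.

Lemma left_sing_vec_mul_tr m N (A : 'M[R]_(m, N)) s x :
  left_sing_vec A s x -> A *m A^T *m x = s ^+ 2 *: x.
Proof. by case=> _ [_ [y [_ [Ay Ax]]]]; rewrite -mulmxA Ax -scalemxAr Ay scalerA. Qed.

(* Right singular vectors are L^T u_c / s_c; for s_c = 0 they are taken to be
   J u_c, which stay orthogonal to the others because L J u_c = 0. *)
Lemma svd_of_eigenbasis m N p (L : 'M[R]_(m, N)) (U : 'M[R]_(m, p)) (s : 'rV[R]_p)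
    (J : 'M[R]_(N, m)) :
  p = m -> U^T *m U = 1%:M -> J^T *m J = 1%:M -> (forall c, 0 <= s 0 c) ->
  (forall c, L *m L^T *m col c U = s 0 c ^+ 2 *: col c U) ->
  (forall c, s 0 c = 0 -> L *m J *m col c U = 0) ->
  exists V : 'M[R]_(N, p), V^T *m V = 1%:M /\ L = U *m diag_mx s *m V^T.
Proof.
move=> pm UtU JtJ s_ge0 LLtU LJU; subst p.
pose v c := if s 0 c == 0 then J *m col c U else (s 0 c)^-1 *: (L^T *m col c U).
have LtU c : L^T *m col c U = s 0 c *: v c.
  rewrite /v; case: eqP => [s0|/eqP s0]; last by rewrite scalerA mulfV // scale1r.
  by rewrite s0 scale0r; apply: mul_tr_self_eq0; rewrite LLtU s0 expr0n scale0r.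
have Lv c : L *m v c = s 0 c *: col c U.
  rewrite /v; case: eqP => [s0|/eqP s0]; first by rewrite mulmxA LJU // s0 scale0r.
  by rewrite -scalemxAr mulmxA LLtU scalerA expr2 mulrA mulVf // mul1r.
have UtU_cd c d : (col c U)^T *m col d U = (c == d)%:R%:M.
  by rewrite tr_col_mul_col UtU mxE.
have vtv c d : s 0 c != 0 -> (v c)^T *m v d = (c == d)%:R%:M.
  move=> s0; rewrite {1}/v (negbTE s0) linearZ /= trmx_mul trmxK.
  rewrite -scalemxAl -mulmxA Lv -scalemxAr UtU_cd scalerA scale_scalar_mx.
  by case: (eqVneq c d) => [<-|_]; rewrite ?mulr1 ?mulVf ?mulr0.
exists (colmx v); split.
  apply/matrixP => c d; have := tr_col_mul_col (colmx v) (colmx v) c d.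
  rewrite !col_colmx => /matrixP/(_ 0 0); rewrite [RHS]mxE eqxx mulr1n => <-.
  suff -> : (v c)^T *m v d = (c == d)%:R%:M by rewrite !mxE eqxx mulr1n.
  have [s0c|s0c] := eqVneq (s 0 c) 0; last exact: vtv.
  have [s0d|s0d] := eqVneq (s 0 d) 0; last first.
    by rewrite -[LHS]trmxK trmx_mul trmxK vtv // tr_scalar_mx eq_sym.
  by rewrite /v s0c s0d eqxx trmx_mul -mulmxA (mulmxA J^T) JtJ mul1mx UtU_cd.
have LtUE : L^T *m U = colmx v *m diag_mx s.
  rewrite mul_mx_diag; apply/matrixP => a c; rewrite !mxE mulrC.
  by move/matrixP/(_ a 0): (LtU c); rewrite !mxE => <-; apply: eq_bigr => b _; rewrite !mxE.
have UUt : U *m U^T = 1%:M by apply: mulmx1C.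
by rewrite -[L]trmxK -[L^T]mulmx1 -UUt mulmxA LtUE !trmx_mul tr_diag_mx trmxK mulmxA.
Qed.

End RealMatrices.

Lemma submxcolZ (R : pzSemiRingType) T (p_ : 'I_T -> nat) m (a : R)
    (A : 'M[R]_(\sum_t p_ t, m)) t :
  submxcol (a *: A) t = a *: submxcol A t.
Proof. by apply/matrixP => i j; rewrite !mxE. Qed.

Section BlockRow.
Variables (R : rcfType) (T n K : nat).
Variables (Ls : 'I_T -> 'M[R]_n) (Ms : 'I_T -> 'M[R]_K) (P : 'M[R]_(n, K)).
Hypotheses (Ls_sym : forall t, (Ls t)^T = Ls t) (Ms_sym : forall t, (Ms t)^T = Ms t).
Hypotheses (PtP : P^T *m P = 1%:M) (LsP : forall t, Ls t *m P = P *m Ms t).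

Local Notation L := (@mxrow R T (fun _ => n) n Ls).
Local Notation M := (@mxrow R T (fun _ => K) K Ms).

Lemma exists_block_selector t0 :
  exists J : 'M[R]_(\sum_(t < T) n, n), J^T *m J = 1%:M /\ L *m J = Ls t0.
Proof.
exists (\mxcol_t (if t == t0 then 1%:M else 0 : 'M[R]_n)); split.
  rewrite tr_mxcol mul_mxrow_mxcol (bigD1 t0) //= eqxx trmx1 mul1mx.
  by rewrite big1 ?addr0 // => t /negbTE ->; rewrite trmx0 mul0mx.
rewrite mul_mxrow_mxcol (bigD1 t0) //= eqxx mulmx1.
by rewrite big1 ?addr0 // => t /negbTE ->; rewrite mulmx0.
Qed.

Lemma tr_mxrow_sym : L^T = \mxcol_t Ls t.
Proof. by rewrite tr_mxrow; apply: eq_mxcol => t; rewrite Ls_sym. Qed.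

Lemma mxrow_mul_tr : L *m L^T = \sum_t Ls t *m Ls t.
Proof. by rewrite tr_mxrow_sym mul_mxrow_mxcol. Qed.

Lemma Ms_mulE m (x : 'M[R]_(K, m)) t : Ms t *m x = submxcol (M^T *m x) t.
Proof. by rewrite tr_mxrow mxcol_mul mxcolK Ms_sym. Qed.

Lemma Ls_P_mulE m (x : 'M[R]_(K, m)) t : Ls t *m (P *m x) = P *m submxcol (M^T *m x) t.
Proof. by rewrite mulmxA LsP -mulmxA Ms_mulE. Qed.

Lemma left_sing_vec_lift s x : left_sing_vec M s x -> left_sing_vec L s (P *m x).
Proof.
case=> s_ge0 [xtx [y [yty [My Mtx]]]].
have PtPy t : (P *m submxcol y t)^T *m (P *m submxcol y t) = (submxcol y t)^T *m submxcol y t.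
  by rewrite trmx_mul -mulmxA (mulmxA P^T) PtP mul1mx.
split => //; split; first by rewrite trmx_mul -mulmxA (mulmxA P^T) PtP mul1mx.
exists (\mxcol_t (P *m submxcol y t)); split; [|split].
- rewrite tr_mxcol mul_mxrow_mxcol; under eq_bigr do rewrite PtPy.
  by rewrite -mul_mxrow_mxcol -tr_mxcol submxcolK.
- rewrite mul_mxrow_mxcol; under eq_bigr do rewrite mulmxA LsP -mulmxA.
  by rewrite -mulmx_sumr -mul_mxrow_mxcol submxcolK My scalemxAr.
- apply/mxcolP => t; rewrite tr_mxrow_sym mxcol_mul !mxcolK submxcolZ mxcolK.
  by rewrite Ls_P_mulE Mtx submxcolZ scalemxAr.
Qed.

Lemma left_sing_vec0_Ls_mul x t : left_sing_vec M 0 x -> Ls t *m (P *m x) = 0.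
Proof. by case=> _ [_ [y [_ [_ Mtx]]]]; rewrite Ls_P_mulE Mtx scale0r submxcol0 mulmx0. Qed.

Lemma mxrow_svd (t0 : 'I_T) (lam : 'I_K -> R) (x : 'I_K -> 'cV[R]_K) p (W : 'M[R]_(n, p)) (c : R) :
  (K + p = n)%N -> (forall i, left_sing_vec M (lam i) (x i)) -> 0 < c ->
  (forall j, L *m L^T *m col j W = c ^+ 2 *: col j W) ->
  let U := row_mx (colmx (fun i => P *m x i)) W in
  U^T *m U = 1%:M ->
  exists V : 'M[R]_(\sum_(t < T) n, K + p),
    V^T *m V = 1%:M /\ L = U *m diag_mx (row_mx (\row_i lam i) (const_mx c)) *m V^T.
Proof.
move=> Kpn svx c_gt0 LLtW U UtU; have [J [JtJ LJ]] := exists_block_selector t0.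
apply: svd_of_eigenbasis UtU JtJ _ _ _ => // j; case: (split_ordP j) => [i ->|k ->];
  rewrite ?colKl ?colKr ?row_mxEl ?row_mxEr !mxE ?col_colmx.
- by case: (svx i).
- exact: ltW.
- exact: left_sing_vec_mul_tr (left_sing_vec_lift (svx i)).
- exact: LLtW.
- by move=> s0; rewrite LJ left_sing_vec0_Ls_mul // -s0.
- by move=> c0; move: c_gt0; rewrite c0 ltxx.
Qed.

End BlockRow.

Lemma sum_delta_mul (R : pzSemiRingType) m (F : 'I_m -> R) k :
  \sum_l (k == l)%:R * F l = F k.
Proof.
rewrite (bigD1 k) //= eqxx mul1r big1 ?addr0 // => l.
by rewrite eq_sym => /negbTE ->; rewrite mul0r.
Qed.

Lemma sqrtr_neq0 (R : rcfType) (x : R) : 0 < x -> Num.sqrt x != 0.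
Proof. by rewrite sqrtr_eq0 -ltNge. Qed.

Lemma diag_invsqrt_conjE (R : rcfType) m (d d' : 'I_m -> R) (A : 'M[R]_m) :
  diag_invsqrt d *m A *m diag_invsqrt d' =
  \matrix_(i, j) ((Num.sqrt (d i))^-1 * A i j * (Num.sqrt (d' j))^-1).
Proof. by rewrite mul_diag_mx mul_mx_diag; apply/matrixP => i j; rewrite !mxE. Qed.

Section StochasticBlockModel.
Variables (R : rcfType) (n K T : nat) (z : 'I_n -> 'I_K) (B : 'I_T -> 'M[R]_K) (rho : R).
Hypotheses (Bsym : forall t, (B t)^T = B t) (B_gt0 : forall t k l, 0 < B t k l).
Hypotheses (rho_gt0 : 0 < rho) (csize_gt0 : forall k, (0 < csize z k)%N).

Local Notation nk k := ((csize z k)%:R : R).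

Lemma sum_by_community (G : 'I_K -> R) : \sum_i G (z i) = \sum_k nk k * G k.
Proof.
rewrite (partition_big z predT) //=; apply: eq_bigr => k _.
rewrite (eq_bigr (fun _ => G k)) => [|i /eqP -> //].
by rewrite sumr_const mulr_natl /csize; congr (_ *+ _); apply: eq_card => i; rewrite inE.
Qed.

Lemma nk_gt0 k : 0 < nk k.
Proof. by rewrite ltr0n. Qed.

Lemma K_le_n : (K <= n)%N.
Proof.
have := sum_by_community (fun _ => 1); rewrite sumr_const card_ord => nE.
rewrite -(ler_nat R) nE -[X in X%:R]card_ord -sumr_const ler_sum // => k _.
by rewrite mulr1 ler1n.
Qed.

Definition cdeg t k := \sum_l nk l * B t k l.

Lemma cdeg_gt0 t k : 0 < cdeg t k.
Proof.
rewrite /cdeg (bigD1 k) //= ltr_wpDr ?mulr_gt0 ?ltr0n //.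
by rewrite sumr_ge0 // => l _; rewrite mulr_ge0 ?ler0n ?ltW.
Qed.

Lemma deg_cdeg t i : deg z B rho t i = rho * cdeg t (z i).
Proof.
rewrite /deg /cdeg mulr_sumr; under eq_bigr do rewrite mxE.
by rewrite (sum_by_community (fun l => rho * B t (z i) l)); apply: eq_bigr => l _; ring.
Qed.

Lemma degQ_cdeg t k : degQ z B t k = nk k * cdeg t k * n%:R^-1 ^+ 2.
Proof.
rewrite /degQ /cdeg mulr_sumr mulr_suml; under eq_bigr do rewrite mxE.
by apply: eq_bigr => l _; ring.
Qed.

Definition Nsqrt : 'M[R]_K := diag_mx (\row_k Num.sqrt (nk k)).

Definition Bnorm t : 'M[R]_K := diag_invsqrt (cdeg t) *m B t *m diag_invsqrt (cdeg t).

Lemma Phi_conjE (C : 'M[R]_K) : Phi R z *m C *m (Phi R z)^T = \matrix_(i, j) C (z i) (z j).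
Proof.
apply/matrixP => i j; rewrite !mxE; under eq_bigr do rewrite !mxE mulrC.
rewrite sum_delta_mul; under eq_bigr do rewrite !mxE.
exact: sum_delta_mul.
Qed.

Lemma Phi_tr_Phi : (Phi R z)^T *m Phi R z = Nsqrt *m Nsqrt.
Proof.
rewrite mulmx_diag; apply/matrixP => k l; rewrite !mxE -expr2 sqr_sqrtr ?ler0n //.
under eq_bigr do rewrite !mxE.
rewrite (sum_by_community (fun m => (m == k)%:R * (m == l)%:R)).
under eq_bigr do rewrite mulrCA eq_sym.
by rewrite sum_delta_mul mulr_natr.
Qed.

Lemma Nsqrt_Ninvsqrt : Nsqrt *m Ninvsqrt R z = 1%:M.
Proof.
rewrite mulmx_diag; apply/matrixP => k l; rewrite !mxE.
by case: eqP => [->|_]; rewrite ?mulfV ?sqrtr_neq0 ?nk_gt0 ?mulr0n.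
Qed.

Lemma Ninvsqrt_Nsqrt : Ninvsqrt R z *m Nsqrt = 1%:M.
Proof. exact: mulmx1C Nsqrt_Ninvsqrt. Qed.

Lemma PhiN_isometry : (Phi R z *m Ninvsqrt R z)^T *m (Phi R z *m Ninvsqrt R z) = 1%:M.
Proof.
rewrite trmx_mul tr_diag_mx -mulmxA (mulmxA (Phi R z)^T) Phi_tr_Phi.
by rewrite -mulmxA Nsqrt_Ninvsqrt mulmx1 Ninvsqrt_Nsqrt.
Qed.

Lemma normalized_Pmat t :
  diag_invsqrt (deg z B rho t) *m Pmat z B rho t *m diag_invsqrt (deg z B rho t) =
  Phi R z *m Bnorm t *m (Phi R z)^T.
Proof.
rewrite Phi_conjE /Bnorm !diag_invsqrt_conjE; apply/matrixP => i j; rewrite !mxE.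
rewrite !deg_cdeg !sqrtrM ?ltW // -[X in X * B t _ _](sqr_sqrtr (ltW rho_gt0)).
by field; rewrite !sqrtr_neq0 ?cdeg_gt0.
Qed.

Lemma sqrt_degQ t k :
  Num.sqrt (degQ z B t k) = Num.sqrt (nk k) * Num.sqrt (cdeg t k) / n%:R.
Proof.
rewrite degQ_cdeg sqrtrM ?mulr_ge0 ?ler0n ?ltW ?cdeg_gt0 //.
by rewrite sqrtr_sqr ger0_norm ?invr_ge0 ?ler0n // sqrtrM ?ler0n.
Qed.

Lemma normalized_Qmat t :
  diag_invsqrt (degQ z B t) *m Qmat z B t *m diag_invsqrt (degQ z B t) =
  Nsqrt *m Bnorm t *m Nsqrt.
Proof.
rewrite /Bnorm !diag_invsqrt_conjE /Nsqrt mul_mx_diag mul_diag_mx.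
apply/matrixP => k l; rewrite !mxE !sqrt_degQ.
have n_gt0 : (0 < n)%N by apply: leq_ltn_trans (leq0n k) (leq_trans (ltn_ord k) K_le_n).
have a0 := sqrtr_neq0 (nk_gt0 k); have b0 := sqrtr_neq0 (nk_gt0 l).
set a := Num.sqrt (nk k) in a0 *; set b := Num.sqrt (nk l) in b0 *.
rewrite -[nk k](sqr_sqrtr (ler0n _ _)) -[nk l](sqr_sqrtr (ler0n _ _)) -/a -/b.
by field; rewrite a0 b0 !sqrtr_neq0 ?cdeg_gt0 // pnatr_eq0 -lt0n n_gt0.
Qed.

Lemma Lt_E t : Lt z B rho t = 1%:M - Phi R z *m Bnorm t *m (Phi R z)^T.
Proof. by rewrite /Lt normalized_Pmat. Qed.

Lemma Mt_E t : Mt z B t = 1%:M - Nsqrt *m Bnorm t *m Nsqrt.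
Proof. by rewrite /Mt normalized_Qmat. Qed.

Lemma Bnorm_sym t : (Bnorm t)^T = Bnorm t.
Proof. by rewrite /Bnorm !trmx_mul tr_diag_mx Bsym mulmxA. Qed.

Lemma Lt_sym t : (Lt z B rho t)^T = Lt z B rho t.
Proof. by rewrite Lt_E linearB /= trmx1 trmx_mul trmxK trmx_mul Bnorm_sym mulmxA. Qed.

Lemma Mt_sym t : (Mt z B t)^T = Mt z B t.
Proof. by rewrite Mt_E linearB /= trmx1 trmx_mul trmx_mul tr_diag_mx Bnorm_sym mulmxA. Qed.

Lemma Lt_PhiN t :
  Lt z B rho t *m (Phi R z *m Ninvsqrt R z) = (Phi R z *m Ninvsqrt R z) *m Mt z B t.
Proof.
rewrite Lt_E Mt_E mulmxBl mulmxBr mul1mx mulmx1; congr (_ - _).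
rewrite -!mulmxA (mulmxA (Phi R z)^T) Phi_tr_Phi -mulmxA Nsqrt_Ninvsqrt mulmx1.
by rewrite (mulmxA (Ninvsqrt R z)) Ninvsqrt_Nsqrt mul1mx.
Qed.

Lemma inSperpE y : inSperp z y <-> (Phi R z)^T *m y = 0.
Proof.
have PtyE k : ((Phi R z)^T *m y) k 0 = \sum_(i | z i == k) y i 0.
  rewrite mxE [RHS]big_mkcond; apply: eq_bigr => i _; rewrite !mxE.
  by case: eqP; rewrite ?mul1r ?mul0r.
by split => [Sy|Pty k]; [apply/colP => k; rewrite PtyE Sy mxE|rewrite -PtyE Pty mxE].
Qed.

Lemma Lt_mul_Sperp t y : inSperp z y -> Lt z B rho t *m y = y.
Proof. by move/inSperpE => Pty; rewrite Lt_E mulmxBl mul1mx -!mulmxA Pty !mulmx0 subr0. Qed.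

Lemma Lfull_mul_tr_Sperp y :
  inSperp z y -> Lfull z B rho *m (Lfull z B rho)^T *m y = T%:R *: y.
Proof.
move=> Sy; rewrite mxrow_mul_tr ?mulmx_suml; last exact: Lt_sym.
under eq_bigr do rewrite -mulmxA !Lt_mul_Sperp //.
by rewrite sumr_const card_ord scaler_nat.
Qed.

Lemma inSperp_of_orthogonal (X : 'M[R]_K) w :
  X^T *m X = 1%:M -> (Phi R z *m Ninvsqrt R z *m X)^T *m w = 0 -> inSperp z w.
Proof.
move=> XtX Xw; apply/inSperpE.
have -> : Phi R z = (Phi R z *m Ninvsqrt R z *m X) *m (X^T *m Nsqrt).
  by rewrite mulmxA -(mulmxA _ X) (mulmx1C XtX) mulmx1 -mulmxA Ninvsqrt_Nsqrt mulmx1.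
by rewrite trmx_mul -(mulmxA _ _ w) Xw mulmx0.
Qed.

End StochasticBlockModel.

Theorem lemma3 (R : rcfType) (n K T : nat) (z : 'I_n -> 'I_K)
  (B : 'I_T -> 'M[R]_K) (rho : R)
  (hT : (0 < T)%N)
  (hBsym : forall t, (B t)^T = B t)
  (hBpos : forall t k l, 0 < B t k l)
  (hBle1 : forall t k l, B t k l <= 1)
  (hrho : 0 < rho) (hrho1 : rho <= 1)
  (hsize : forall k, (0 < csize z k)%N)
  (lam : 'I_K -> R) (x : 'I_K -> 'cV[R]_K)
  (hlam_sorted : forall i j : 'I_K, (i <= j)%N -> lam i <= lam j)
  (hx_on : orthonormal_vecs x)
  (hx_sv : forall i, left_sing_vec (Mfull z B) (lam i) (x i)) :
  let L := Lfull z B rho in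
  let u := fun i => Phi R z *m Ninvsqrt R z *m x i in
  (forall y : 'cV[R]_n, inSperp z y -> L *m L^T *m y = T%:R *: y)
  /\ (forall i, inS z (u i))
  /\ orthonormal_vecs u
  /\ (forall i, L *m L^T *m u i = (lam i ^+ 2) *: u i)
  /\ (forall i, left_sing_vec L (lam i) (u i))
  /\ exists (W : 'M[R]_(n, n - K)) (V : 'M[R]_(\sum_(t < T) n, K + (n - K))),
       let U := row_mx (\matrix_(j, i) u i j 0) W in
       let s := row_mx (\row_i lam i) (const_mx (Num.sqrt T%:R)) in
       (forall j, inSperp z (col j W))
       /\ U^T *m U = 1%:M
       /\ V^T *m V = 1%:M
       /\ L = U *m diag_mx s *m V^T.
Proof.
move=> L u; pose P := Phi R z *m Ninvsqrt R z.
have PtP : P^T *m P = 1%:M := PhiN_isometry R hsize.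
have Lsym := Lt_sym hBsym hBpos hrho hsize; have Msym := Mt_sym hBsym hBpos hsize.
have LP := Lt_PhiN hBpos hrho hsize.
have sv i : left_sing_vec L (lam i) (u i).
  exact: (left_sing_vec_lift Lsym Msym PtP LP (hx_sv i)).
have on_u : orthonormal_vecs u.
  by move=> i j; rewrite trmx_mul -mulmxA (mulmxA P^T) PtP mul1mx hx_on.
have Kn := subnKC (K_le_n R hsize).
have [W [uW WtW]] : exists W : 'M_(n, n - K), (colmx u)^T *m W = 0 /\ W^T *m W = 1%:M.
  by apply: orthonormal_completion (orthonormal_colmx on_u); rewrite Kn.
have W_perp j : inSperp z (col j W).
  apply: (inSperp_of_orthogonal hsize (orthonormal_colmx hx_on)).
  by rewrite mul_colmx colE mulmxA uW mul0mx.
have UtU := orthonormal_row_mx (orthonormal_colmx on_u) WtW uW.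
have sqrtT_gt0 : 0 < Num.sqrt (T%:R : R) by rewrite sqrtr_gt0 ltr0n.
have eig_W j : L *m L^T *m col j W = Num.sqrt T%:R ^+ 2 *: col j W.
  by rewrite Lfull_mul_tr_Sperp // sqr_sqrtr ?ler0n.
have [V [VtV LE]] := mxrow_svd Lsym Msym PtP LP (Ordinal hT) Kn hx_sv sqrtT_gt0 eig_W UtU.
split; first exact: Lfull_mul_tr_Sperp hBpos hrho hsize.
split=> [i|]; first by exists (Ninvsqrt R z *m x i); rewrite mulmxA.
split=> //; split=> [i|]; first exact: left_sing_vec_mul_tr (sv i).
by split=> //; exists W, V.
Qed.
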